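(* Let $T_1=(V,E_1)$ and $T_2=(V,E_2)$ be trees on the common vertex set $V=\{1,\dots,n\}$. Suppose there are orderings $\pi_1=(\tau_1,\dots,\tau_{n-1})$ of $E_1$ and $\pi_2=(\sigma_1,\dots,\sigma_{n-1})$ of $E_2$ such that $\mathcal{K}_{\pi_1}(T_1)=\mathcal{K}_{\pi_2}(T_2)$ in $\mathbb{C}[S_n]$. Then $E_1=E_2$ (so $T_1=T_2$). Moreover, whenever two distinct edges $(i,j)$ and $(j,k)$ share the endpoint $j$ and $(i,j)$ precedes $(j,k)$ in $\pi_1$, then $(i,j)$ also precedes $(j,k)$ in $\pi_2$.
   Context: $\mathbb{C}[S_n]$ is the group algebra of the symmetric group $S_n$; an edge $(i,j)$ is identified with the transposition $(i\,j)\in S_n$. For a graph $G$ with vertex set labeled by $\{1,\dots,n\}$ and an ordering $\pi=(e_1,\dots,e_m)$ of its edges, $\mathcal{K}_\pi(G)=n!\,(1-e_1)(1-e_2)\cdots(1-e_m)\in\mathbb{C}[S_n]$, the product taken in the order given by $\pi$ (here $1$ is the identity permutation). *)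

From HB Require Import structures.
From mathcomp Require Import all_boot all_order all_algebra all_fingroup all_field.
Set Implicit Arguments. Unset Strict Implicit. Unset Printing Implicit Defensive.
Import GRing.Theory.
Local Open Scope ring_scope.

(* Vertex set {1,...,n} is modelled by 'I_n = {0,...,n-1}. *)
(* An edge is an ordered pair (i, j) with i < j (normalized); it denotes the
   unordered edge {i, j} and the transposition (i j). *)
Definition edge n := ('I_n * 'I_n)%type.

Definition simple_edges n (E : {set edge n}) : Prop :=
  forall e, e \in E -> (e.1 < e.2)%N.

Definition adj n (E : {set edge n}) : rel 'I_n :=
  fun x y => ((x, y) \in E) || ((y, x) \in E).

Definition connected_graph n (E : {set edge n}) : Prop :=
  forall x y : 'I_n, connect (adj E) x y.

Definition acyclic_graph n (E : {set edge n}) : Prop :=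
  forall s : seq 'I_n, uniq s -> (2 < size s)%N -> ~~ path.cycle (adj E) s.

Definition is_tree n (E : {set edge n}) : Prop :=
  simple_edges E /\ connected_graph E /\ acyclic_graph E.

Definition is_ordering n (E : {set edge n}) (pi : seq (edge n)) : Prop :=
  perm_eq pi (enum E).

(* The group algebra C[S_n], as functions S_n -> C with convolution product. *)
Definition CSn n := {ffun {perm 'I_n} -> algC}.

Definition ga_one n : CSn n := [ffun s => (s == 1%g)%:R].
Definition ga_of_perm n (p : {perm 'I_n}) : CSn n := [ffun s => (s == p)%:R].
Definition ga_sub n (f g : CSn n) : CSn n := [ffun s => f s - g s].
Definition ga_mul n (f g : CSn n) : CSn n :=
  [ffun s => \sum_(a : {perm 'I_n}) f a * g ((a^-1) * s)%g].
Definition ga_scale n (c : algC) (f : CSn n) : CSn n := [ffun s => c * f s].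

Definition transp n (e : edge n) : {perm 'I_n} := tperm e.1 e.2.

Definition Kpi n (pi : seq (edge n)) : CSn n :=
  ga_scale (n`!)%:R
    (foldr (fun e acc => ga_mul (ga_sub (ga_one n) (ga_of_perm (transp e))) acc)
           (ga_one n) pi).

Definition share_endpoint n (e f : edge n) : bool :=
  (e.1 == f.1) || (e.1 == f.2) || (e.2 == f.1) || (e.2 == f.2).

(* Expanding n! (1 - e_1) ... (1 - e_m) over the subsequences S of the ordering, the
   coefficient of a permutation p is sgn(p) n! times the number of S whose product of
   transpositions is p: all these terms carry the same sign, so nothing cancels and K_pi
   determines which permutations are such products.  In a forest, a product of distinct
   edges moves every endpoint of every edge it uses, since otherwise the remaining edges
   would join the two endpoints of the removed one and close a cycle.  Hence the
   transposition (a b) is a product of edges of a tree only via the edge {a, b}, which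
   recovers the edge set; and for adjacent edges {i, j}, {j, k} the 3-cycle (i j)(j k)
   arises only from the subsequence [{i, j}; {j, k}], which records their relative order. *)

From mathcomp Require Import all_boot all_order all_algebra all_fingroup all_field.
Set Implicit Arguments. Unset Strict Implicit. Unset Printing Implicit Defensive.
Import GRing.Theory Num.Theory.
Local Open Scope ring_scope.

Fixpoint subseqs (T : Type) (s : seq T) : seq (seq T) :=
  if s is x :: s' then subseqs s' ++ map (cons x) (subseqs s') else [:: [::]].

Lemma mem_subseqs (T : eqType) (s t : seq T) : (t \in subseqs s) = subseq t s.
Proof.
elim: s t => [|x s IHs] [|y t] //=; rewrite mem_cat IHs ?sub0seq //.
case: eqVneq => [->|neq_yx].
  rewrite mem_map; last by move=> u v [].
  by rewrite IHs orb_idl //; apply: subseq_trans; apply: subseq_cons.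
by rewrite orb_idr // => /mapP [u _ [/eqP]]; rewrite (negbTE neq_yx).
Qed.

Lemma subseq_pair (T : eqType) (x y : T) (s : seq T) : x != y -> uniq s ->
  subseq [:: x; y] s = [&& x \in s, y \in s & (index x s < index y s)%N].
Proof.
move=> neq_xy; elim: s => [|z s IHs] //= /andP [zNs uniq_s].
have [<-|neq_xz] := eqVneq x z.
  by rewrite sub1seq !inE eqxx eq_sym (negbTE neq_xy) ltnS andbT.
rewrite IHs // !inE (negbTE neq_xz) /=.
have [eq_yz|_] := eqVneq y z; last by rewrite ltnS.
by rewrite eq_yz (negbTE zNs) andbF.
Qed.

Section GroupAlgebra.
Variable n : nat.
Implicit Types (p s : {perm 'I_n}) (e : edge n) (pi S : seq (edge n)).

Definition Kprod pi : CSn n :=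
  foldr (fun e acc => ga_mul (ga_sub (ga_one n) (ga_of_perm (transp e))) acc)
        (ga_one n) pi.

Lemma KpiE pi : Kpi pi = ga_scale (n`!)%:R (Kprod pi).
Proof. by []. Qed.

Definition transp_prod S : {perm 'I_n} := (\prod_(e <- S) transp e)%g.

Lemma Kprod_cons e pi s : Kprod (e :: pi) s = Kprod pi s - Kprod pi (transp e * s)%g.
Proof.
have sum_delta c (F : {perm 'I_n} -> algC) : \sum_a (a == c)%:R * F a = F c.
  by rewrite (bigD1 c) //= eqxx mul1r big1 ?addr0 // => a /negbTE->; rewrite mul0r.
rewrite /= /ga_mul ffunE.
under eq_bigr => a _ do rewrite /ga_sub /ga_one /ga_of_perm !ffunE mulrBl.
by rewrite sumrB !sum_delta invg1 mul1g /transp tpermV.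
Qed.

Lemma Kprod_coef pi p : {in pi, forall e, e.1 != e.2} ->
  Kprod pi p = (-1) ^+ odd_perm p * (count (fun S => transp_prod S == p) (subseqs pi))%:R.
Proof.
elim: pi p => [|e pi IHpi] p loopless.
  rewrite /= /ga_one ffunE addn0 /transp_prod big_nil [1%g == p]eq_sym.
  by have [->|] := eqVneq p 1%g; rewrite ?odd_perm1 ?mulr0 ?mul1r.
have loopless_pi : {in pi, forall e, e.1 != e.2}.
  by move=> f pi_f; apply: loopless; rewrite inE pi_f orbT.
rewrite Kprod_cons !IHpi // odd_permM odd_tperm loopless ?mem_head //.
rewrite signr_addb mulN1r mulNr opprK -mulrDr -natrD count_cat count_map.
congr (_ * (_ + _)%:R); apply: eq_count => S /=.
by rewrite /transp_prod big_cons (can2_eq (tpermKg _ _) (tpermKg _ _)).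
Qed.

Lemma Kpi_eq_transp_prod pi1 pi2 S :
  {in pi1, forall e, e.1 != e.2} -> {in pi2, forall e, e.1 != e.2} ->
  Kpi pi1 = Kpi pi2 -> subseq S pi1 ->
  exists2 S', subseq S' pi2 & transp_prod S' = transp_prod S.
Proof.
move=> loopless1 loopless2 eqK sub_S; set p := transp_prod S.
have nz_fact : (n`!)%:R != 0 :> algC by rewrite pnatr_eq0 -lt0n fact_gt0.
have /(congr1 (fun F : CSn n => F p)) := eqK.
rewrite !KpiE /ga_scale !ffunE !Kprod_coef //.
move/(mulfI nz_fact)/(mulfI (negbT (signr_eq0 _ _)))/eqP.
rewrite eqr_nat => /eqP eq_count.
have : has (fun S' => transp_prod S' == p) (subseqs pi2).
  by rewrite has_count -eq_count -has_count; apply/hasP; exists S; rewrite ?mem_subseqs.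
by case/hasP => S'; rewrite mem_subseqs => sub_S' /eqP; exists S'.
Qed.
End GroupAlgebra.

Section Orderings.
Variable n : nat.
Implicit Types (E : {set edge n}) (pi : seq (edge n)).

Lemma ordering_uniq E pi : is_ordering E pi -> uniq pi.
Proof. by move/perm_uniq->; apply: enum_uniq. Qed.

Lemma mem_ordering E pi : is_ordering E pi -> pi =i E.
Proof. by move/perm_mem => eq_pi z; rewrite eq_pi mem_enum. Qed.

Lemma ordering_loopless E pi : simple_edges E -> is_ordering E pi ->
  {in pi, forall e, e.1 != e.2}.
Proof. by move=> simpleE /mem_ordering eq_pi e; rewrite eq_pi neq_ltn => /simpleE ->. Qed.

Lemma subseq_ordering E pi S : is_ordering E pi -> subseq S pi ->
  uniq S /\ {subset S <= E}.
Proof.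
move=> ord_pi sub_S; split; first exact: subseq_uniq sub_S (ordering_uniq ord_pi).
by move=> z /(mem_subseq sub_S); rewrite (mem_ordering ord_pi).
Qed.
End Orderings.

Section Forest.
Variable n : nat.
Implicit Types (A : {set edge n}) (e z : edge n) (S : seq (edge n)) (x y : 'I_n).

Lemma adj_sym A : symmetric (adj A).
Proof. by move=> x y; rewrite /adj orbC. Qed.

Lemma connect_adj_sym A x y : connect (adj A) x y = connect (adj A) y x.
Proof. exact/sym_connect_sym/adj_sym. Qed.

Lemma adj_edge A e : e \in A -> adj A e.1 e.2.
Proof. by rewrite /adj -surjective_pairing => ->. Qed.

Lemma connect_transp_prod S x : connect (adj [set z in S]) x (transp_prod S x).
Proof.
elim: S x => [|e S IHS] x; first by rewrite /transp_prod big_nil perm1.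
rewrite /transp_prod big_cons permM.
have sub_adj : subrel (adj [set z in S]) (adj [set z in e :: S]).
  by move=> u v; rewrite /adj !inE => /orP [] ->; rewrite ?orbT.
apply: connect_trans (connect_sub _ (IHS _)); last first.
  by move=> u v /sub_adj; apply: connect1.
have eA : adj [set z in e :: S] e.1 e.2 by rewrite adj_edge // inE mem_head.
by rewrite /transp; case: tpermP => [->|->|]; rewrite ?connect0 ?connect1 // adj_sym.
Qed.

Lemma tperm_moved (a b x : 'I_n) : tperm a b x != x -> (x == a) || (x == b).
Proof. by case: tpermP => [->|->|_ _]; rewrite ?eqxx ?orbT. Qed.

Definition joins e x y := (e == (x, y)) || (e == (y, x)).

Lemma joins_transp e x y : joins e x y -> transp e = tperm x y.
Proof. by case/orP => /eqP ->; rewrite /transp // tpermC. Qed.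

Lemma joins_adj A e x y : e \in A -> joins e x y -> adj A x y.
Proof. by move=> Ae /orP [] /eqP eq_e; rewrite /adj -eq_e Ae ?orbT. Qed.

Lemma transp_prod_eq_pair S e f (i j k : 'I_n) : uniq S -> {subset S <= [:: e; f]} ->
  i != j -> j != k -> i != k -> joins e i j -> joins f j k ->
  transp_prod S i = k -> S = [:: e; f].
Proof.
move=> uniq_S sSef neq_ij neq_jk neq_ik eij fjk.
have [te tf] := (joins_transp eij, joins_transp fjk).
have [neq_ji neq_ki] : j != i /\ k != i by split; rewrite eq_sym.
have /(uniq_leq_size uniq_S) := sSef.
case: S => [|x [|y [|? ?]]] // in uniq_S sSef *; rewrite /transp_prod ?big_cons big_nil.
- by rewrite perm1 => _ /eqP; rewrite (negbTE neq_ik).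
- move: (sSef x (mem_head _ _)); rewrite !inE mulg1 => /orP [] /eqP -> _.
    by rewrite te tpermL => /eqP; rewrite (negbTE neq_jk).
  by rewrite tf tpermD // => /eqP; rewrite (negbTE neq_ik).
- move: (sSef x (mem_head _ _)) (sSef y (mem_last x [:: y])).
  rewrite !inE mulg1 permM => /orP [] /eqP -> /orP [] /eqP -> // _.
  all: rewrite ?te ?tf ?tpermK ?(tpermD neq_ji neq_ki) ?tpermL => /eqP.
  all: by rewrite ?(negbTE neq_ik) ?(negbTE neq_jk).
Qed.

Variable E : {set edge n}.
Hypotheses (simpleE : simple_edges E) (acyclicE : acyclic_graph E).

Lemma edge_not_connect A e : {subset A <= E} -> e \in E -> e \notin A ->
  ~~ connect (adj A) e.1 e.2.
Proof.
move=> sAE Ee eNA; apply/connectP => -[p adj_p last_p].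
have lt_e : (e.1 < e.2)%N := simpleE Ee.
have sub_adj : subrel (adj A) (adj E).
  by move=> u v; rewrite /adj => /orP [] /sAE ->; rewrite ?orbT.
case: (shortenP adj_p) last_p => -[|y [|w q]] adj_q uniq_q _ last_q.
- by move: last_q lt_e => /= <-; rewrite ltnn.
- move: adj_q last_q => /= /andP [adj_ey _] eq_ey; move: adj_ey.
  rewrite -eq_ey /adj -surjective_pairing (negbTE eNA) => /sAE/simpleE /=.
  by move/(ltn_trans lt_e); rewrite ltnn.
- apply: (negP (acyclicE uniq_q isT)).
  rewrite /path.cycle rcons_path (sub_path sub_adj adj_q) /= -[last w q]last_q.
  by rewrite adj_sym adj_edge.
Qed.

Lemma transp_prod_moves S z x : uniq S -> {subset S <= E} -> z \in S ->
  (x == z.1) || (x == z.2) -> transp_prod S x != x.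
Proof.
elim: S z => [//|e S IHS] z /= /andP [eNS uniq_S] seSE; rewrite inE.
have sSE : {subset S <= E} by move=> f Sf; apply: seSE; rewrite inE Sf orbT.
have e_disconnected : ~~ connect (adj [set f in S]) e.1 e.2.
  by rewrite edge_not_connect ?inE ?seSE ?mem_head // => f; rewrite inE => /sSE.
rewrite /transp_prod big_cons permM -/(transp_prod S) /transp.
case: tpermP => [->|->|/eqP neq1 /eqP neq2] /=.
- by move=> _ _; apply: contraTneq (connect_transp_prod S e.2) => ->; rewrite connect_adj_sym.
- by move=> _ _; apply: contraTneq (connect_transp_prod S e.1) => ->.
- case/orP => [/eqP eq_ze|]; last exact: IHS.
  by rewrite eq_ze -!(eq_sym x) (negbTE neq1) (negbTE neq2).
Qed.

Lemma transp_prod_tperm S (a b : 'I_n) : uniq S -> {subset S <= E} -> (a < b)%N ->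
  transp_prod S = tperm a b -> (a, b) \in S.
Proof.
move=> uniq_S sSE lt_ab prod_S.
case: S => [|z S'] in uniq_S sSE prod_S *.
  move/(congr1 (fun s : {perm 'I_n} => s a)): prod_S.
  by rewrite /transp_prod big_nil perm1 tpermL => eq_ab; rewrite eq_ab ltnn in lt_ab.
have endpoint_ab x : (x == z.1) || (x == z.2) -> (x == a) || (x == b).
  by move=> zx; apply: tperm_moved; rewrite -prod_S (transp_prod_moves _ _ (mem_head z S')).
have lt_z : (z.1 < z.2)%N by apply/simpleE/sSE/mem_head.
have /orP [/eqP z1|/eqP z1] : (z.1 == a) || (z.1 == b) by rewrite endpoint_ab ?eqxx.
all: have /orP [/eqP z2|/eqP z2] : (z.2 == a) || (z.2 == b) by rewrite endpoint_ab ?eqxx ?orbT.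
all: rewrite z1 z2 ?ltnn // in lt_z.
- by rewrite [z]surjective_pairing z1 z2 mem_head.
- by have := ltn_trans lt_ab lt_z; rewrite ltnn.
Qed.

Lemma transp_prod_3cycle S e f (i j k : 'I_n) : uniq S -> {subset S <= E} ->
  e \in E -> f \in E -> i != j -> j != k -> i != k -> joins e i j -> joins f j k ->
  transp_prod S = (tperm i j * tperm j k)%g -> S = [:: e; f].
Proof.
move=> uniq_S sSE Ee Ef neq_ij neq_jk neq_ik eij fjk prod_S.
have moved_ijk x : transp_prod S x != x -> [|| x == i, x == j | x == k].
  rewrite prod_S permM; case: (tpermP i j x) => [->|->|_ _].
  - by rewrite eqxx.
  - by rewrite eqxx orbT.
  - by move/tperm_moved => ->; rewrite orbT.
set A := [set e; f].
have sAE : {subset A <= E} by move=> z; rewrite !inE => /orP [] /eqP ->.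
have connect_j x : [|| x == i, x == j | x == k] -> connect (adj A) j x.
  case/or3P => /eqP ->; rewrite ?connect0 // connect1 //.
    by rewrite adj_sym (joins_adj _ eij) // !inE eqxx.
  by rewrite (joins_adj _ fjk) // !inE eqxx orbT.
have sSA : {subset S <= A}.
  move=> z Sz; apply/negPn/negP => zNA.
  have zE := sSE _ Sz.
  have moved_z y : (y == z.1) || (y == z.2) -> connect (adj A) j y.
    by move=> zy; apply/connect_j/moved_ijk/(transp_prod_moves uniq_S sSE Sz).
  apply: (negP (edge_not_connect sAE zE zNA)).
  rewrite (connect_trans _ (moved_z _ _)) ?eqxx ?orbT // connect_adj_sym.
  by rewrite moved_z ?eqxx.
apply: (transp_prod_eq_pair uniq_S _ neq_ij neq_jk neq_ik eij fjk).
  by move=> z /sSA; rewrite !inE.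
by rewrite prod_S permM !tpermL.
Qed.
End Forest.

Lemma share_endpoint_joins n (e f : edge n) : (e.1 < e.2)%N -> (f.1 < f.2)%N ->
  e != f -> share_endpoint e f ->
  exists i j k, [/\ i != j, j != k, i != k, joins e i j & joins f j k].
Proof.
case: e f => [e1 e2] [f1 f2] /= lt_e lt_f neq_ef.
have neq_lt (u v : 'I_n) : (u < v)%N -> u != v by rewrite neq_ltn => ->.
have joins_l (x y : 'I_n) : joins (x, y) x y by rewrite /joins eqxx.
have joins_r (x y : 'I_n) : joins (x, y) y x by rewrite /joins eqxx orbT.
rewrite /share_endpoint /= -!orbA; case/or4P => /eqP eq_ef; subst.
- exists e2, f1, f2; split; rewrite ?joins_l ?joins_r //.
  + by rewrite eq_sym neq_lt.
  + exact: neq_lt.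
  + by apply: contra_neq neq_ef => ->.
- exists e2, f2, f1; split; rewrite ?joins_l ?joins_r // eq_sym neq_lt //.
  exact: ltn_trans lt_f lt_e.
- exists e1, f1, f2; split; rewrite ?joins_l // neq_lt //.
  exact: ltn_trans lt_e lt_f.
- exists e1, f2, f1; split; rewrite ?joins_l ?joins_r //.
  + exact: neq_lt.
  + by rewrite eq_sym neq_lt.
  + by apply: contra_neq neq_ef => ->.
Qed.

Lemma Kpi_eq_edges_subset n (E1 E2 : {set edge n}) (pi1 pi2 : seq (edge n)) :
  simple_edges E1 -> simple_edges E2 -> acyclic_graph E2 ->
  is_ordering E1 pi1 -> is_ordering E2 pi2 -> Kpi pi1 = Kpi pi2 -> {subset E1 <= E2}.
Proof.
move=> simple1 simple2 acyclic2 ord1 ord2 eqK [a b] E1ab.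
have sub_ab : subseq [:: (a, b)] pi1 by rewrite sub1seq (mem_ordering ord1).
have [S sub_S prod_S] := Kpi_eq_transp_prod (ordering_loopless simple1 ord1)
  (ordering_loopless simple2 ord2) eqK sub_ab.
have [uniq_S sSE2] := subseq_ordering ord2 sub_S.
apply/sSE2/(transp_prod_tperm simple2 acyclic2 uniq_S sSE2 (simple1 _ E1ab)).
by rewrite prod_S /transp_prod big_seq1.
Qed.

Lemma Kpi_eq_index n (E : {set edge n}) (pi1 pi2 : seq (edge n)) (e f : edge n) :
  simple_edges E -> acyclic_graph E -> is_ordering E pi1 -> is_ordering E pi2 ->
  Kpi pi1 = Kpi pi2 -> e \in E -> f \in E -> e != f -> share_endpoint e f ->
  (index e pi1 < index f pi1)%N -> (index e pi2 < index f pi2)%N.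
Proof.
move=> simpleE acyclicE ord1 ord2 eqK Ee Ef neq_ef share_ef lt_ef.
have [i [j [k [neq_ij neq_jk neq_ik eij fjk]]]] :=
  share_endpoint_joins (simpleE _ Ee) (simpleE _ Ef) neq_ef share_ef.
have sub_ef : subseq [:: e; f] pi1.
  by rewrite subseq_pair ?(ordering_uniq ord1) // !(mem_ordering ord1) Ee Ef.
have [S sub_S prod_S] := Kpi_eq_transp_prod (ordering_loopless simpleE ord1)
  (ordering_loopless simpleE ord2) eqK sub_ef.
have [uniq_S sSE] := subseq_ordering ord2 sub_S.
have eq_S : S = [:: e; f].
  apply: (transp_prod_3cycle simpleE acyclicE uniq_S sSE Ee Ef neq_ij neq_jk neq_ik eij fjk).
  by rewrite prod_S /transp_prod big_cons big_seq1 (joins_transp eij) (joins_transp fjk).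
by move: sub_S; rewrite eq_S subseq_pair ?(ordering_uniq ord2) // => /and3P [].
Qed.

Theorem mainTheorem7 (n : nat) (E1 E2 : {set edge n})
  (pi1 pi2 : seq (edge n)) :
  is_tree E1 -> is_tree E2 ->
  is_ordering E1 pi1 -> is_ordering E2 pi2 ->
  Kpi pi1 = Kpi pi2 ->
  E1 = E2 /\
  (forall e f : edge n, e \in E1 -> f \in E1 -> e != f -> share_endpoint e f ->
     (index e pi1 < index f pi1)%N -> (index e pi2 < index f pi2)%N).
Proof.
move=> [simple1 [_ acyclic1]] [simple2 [_ acyclic2]] ord1 ord2 eqK.
have eqE : E1 = E2.
  apply/setP => z; apply/idP/idP.
    exact: (Kpi_eq_edges_subset simple1 simple2 acyclic2 ord1 ord2 eqK).
  exact: (Kpi_eq_edges_subset simple2 simple1 acyclic1 ord2 ord1 (esym eqK)).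
split=> // e f; rewrite -eqE in ord2.
exact: (Kpi_eq_index simple1 acyclic1 ord1 ord2 eqK).
Qed.
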